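(* Let $m\in\mathbb{Z}_{>0}$, let $X$ be a set with $|X|=4m$, and let $\mu_X$ be the uniform distribution on $X$. Let $S$ be the class of all $s:X\to\{-1,1\}$ with $|\{x:s(x)=1\}|=m$, and $B$ the class of all $b:X\to\{-1,1\}$ with $|\{x:b(x)=1\}|=2m$. Then for all $\varepsilon,\delta\ge0$, $\#\mathsf{CompL}^{\mu_X}(S,B,\varepsilon,\delta)=0$, whereas for all $\varepsilon\in(0,1/4)$ and $\delta\in(0,1/2)$, $\#\mathsf{CompL}^{\mu_X}(B,S,\varepsilon,\delta)\ge(1/2-2\varepsilon)m$.
   Context: Distribution-specific comparative learning $\mathsf{CompL}^{\mu_X}_n(S,B,\varepsilon,\delta)$: (possibly randomized) learners taking $n$ points of $X\times\{-1,1\}$ and outputting $f:X\to\{-1,1\}$ such that for every distribution $\mu$ on $X\times\{-1,1\}$ with marginal $\mu|_X=\mu_X$ and $\Pr_\mu[s(x)=y]=1$ for some $s\in S$, given $n$ i.i.d. samples, with probability $\ge1-\delta$, $\Pr_\mu[f(x)\ne y]\le\inf_{b\in B}\Pr_\mu[b(x)\ne y]+\varepsilon$. $\#\mathsf{CompL}^{\mu_X}$ is the least such $n$. *)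

From HB Require Import structures.
From mathcomp Require Import all_boot all_order all_algebra.
From mathcomp Require Import boolp classical_sets reals constructive_ereal ereal.
Set Implicit Arguments. Unset Strict Implicit. Unset Printing Implicit Defensive.
Import Order.TTheory GRing.Theory Num.Theory.
Local Open Scope ring_scope.

(* Labels {-1,1} are encoded as bool: true <-> 1, false <-> -1.
   Hypotheses X -> {-1,1} are finite functions {ffun X -> bool}. *)
Section CompL.
Context {R : realType} {X : finType}.

Definition hyp := {ffun X -> bool}.

Definition is_dist (T : finType) (p : {ffun T -> R}) : Prop :=
  (forall t, 0 <= p t) /\ \sum_t p t = 1.

Definition uniform (x : X) : R := (#|X|%:R)^-1.

Definition err (mu : {ffun X * bool -> R}) (f : hyp) : R :=
  \sum_(p : X * bool | f p.1 != p.2) mu p.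

Definition admissible (muX : X -> R) (S : {set hyp}) (mu : {ffun X * bool -> R}) : Prop :=
  [/\ is_dist mu,
      (forall x, mu (x, true) + mu (x, false) = muX x) &
      exists2 s, s \in S & \sum_(p : X * bool | s p.1 == p.2) mu p = 1].

(* A (possibly randomized) learner on n points: maps a sample to a
   probability distribution over output hypotheses. *)
Definition learner (n : nat) := n.-tuple (X * bool) -> {ffun hyp -> R}.

Definition is_learner n (A : learner n) : Prop := forall t, is_dist (A t).

(* Probability (over the i.i.d. sample and the learner's randomness) that the
   output f satisfies err f <= inf_{b in B} err b + eps
   (i.e. err f - eps is a lower bound of {err b | b in B}). *)
Definition success_prob n (A : learner n) (mu : {ffun X * bool -> R})
    (B : {set hyp}) (eps : R) : R :=
  \sum_(t : n.-tuple (X * bool))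
     (\prod_(i < n) mu (tnth t i)) *
     \sum_(f : hyp | [forall b in B, err mu f <= err mu b + eps]) A t f.

Definition CompL (muX : X -> R) (n : nat) (S B : {set hyp}) (eps delta : R) : Prop :=
  exists A : learner n, is_learner A /\
    forall mu, admissible muX S mu -> 1 - delta <= success_prob A mu B eps.

(* #CompL^{muX}(S,B,eps,delta): least such n (+oo if none), as an extended real *)
Definition numCompL (muX : X -> R) (S B : {set hyp}) (eps delta : R) : \bar R :=
  ereal_inf [set (n%:R)%:E | n in [set n | CompL muX n S B eps delta]].

Definition classK (k : nat) : {set hyp} := [set h : hyp | #|[set x | h x]| == k].

End CompL.

(* Realizable by S = classK m, the data distribution is forced: uniform on X,
   labelled by some s of weight m.  The constant -1 hypothesis errs on the m
   points of s, whereas any b of weight 2m disagrees with s on at least m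
   points, so no sample is needed.

   For the converse, X is identified with 2m cells of two points each.  For
   c : cells -> bool, concept c labels 1 one point of each cell (weight 2m),
   and its restriction to half of the cells has weight m and error 1/4; hence
   any eps-good output lies within Hamming distance m + 4m eps of concept c.
   Flipping c on the cells a sample t does not hit leaves the likelihood of t
   unchanged but moves the concept by at least 2(2m - n).  When
   n < (1 - 4 eps) m no hypothesis is good for both, so the success probability
   averaged over c is at most 1/2 < 1 - delta. *)

From HB Require Import structures.
From mathcomp Require Import all_boot all_order all_algebra.
From mathcomp Require Import boolp classical_sets reals constructive_ereal ereal.
From mathcomp Require Import lra.
Set Implicit Arguments. Unset Strict Implicit. Unset Printing Implicit Defensive.
Import Order.TTheory GRing.Theory Num.Theory.
Local Open Scope ring_scope.

Lemma card_eq_bij (T U : finType) : #|T| = #|U| -> exists f : T -> U, bijective f.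
Proof.
move=> TU; exists (fun x => enum_val (cast_ord TU (enum_rank x))).
exists (fun y => enum_val (cast_ord (esym TU) (enum_rank y))) => z.
  by rewrite enum_valK cast_ordK enum_rankK.
by rewrite enum_valK cast_ordKV enum_rankK.
Qed.

Lemma sum_tuple_prod (R : comPzSemiRingType) (T : finType) n (F : T -> R) :
  \sum_(t : n.-tuple T) \prod_(i < n) F (tnth t i) = \prod_(i < n) \sum_x F x.
Proof.
rewrite bigA_distr_bigA /= (reindex (fun f : {ffun 'I_n -> T} => [tuple f i | i < n])).
  by apply: eq_bigr => f _; apply: eq_bigr => i _; rewrite tnth_mktuple.
exists (fun t : n.-tuple T => [ffun i => tnth t i]) => [f _ | t _].
  by apply/ffunP => i; rewrite ffunE tnth_mktuple.
by apply: eq_from_tnth => i; rewrite tnth_mktuple ffunE.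
Qed.

Lemma sum_prod_bool (R : nmodType) (T : finType) (F : T * bool -> R) :
  \sum_p F p = \sum_x (F (x, true) + F (x, false)).
Proof.
rewrite (eq_bigr (fun x => \sum_b F (x, b))) => [|x _]; last by rewrite big_bool.
by rewrite pair_bigA; apply: eq_bigr => -[].
Qed.

Lemma sum_le_half_involutive (R : realFieldType) (C : finType) (w g : C -> R)
    (f : C -> C) :
  involutive f -> (forall c, 0 <= w c) -> (forall c, w (f c) = w c) ->
  (forall c, g c + g (f c) <= 1) -> \sum_c w c * g c <= 2^-1 * \sum_c w c.
Proof.
move=> fK w_ge0 wf gf.
have sum_wgf : \sum_c w c * g c = \sum_c w c * g (f c).
  by rewrite (reindex_inj (can_inj fK)); apply: eq_bigr => c _; rewrite wf.
suff : \sum_c w c * g c + \sum_c w c * g c <= \sum_c w c by lra.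
rewrite {2}sum_wgf -big_split /=; apply: ler_sum => c _.
by rewrite -mulrDr ler_piMr.
Qed.

Lemma sum_sum_le_half_involutive (R : realFieldType) (C T : finType) (w g : C -> T -> R)
    (f : T -> C -> C) :
  (forall t, involutive (f t)) -> (forall c t, 0 <= w c t) ->
  (forall c t, w (f t c) t = w c t) -> (forall c t, g c t + g (f t c) t <= 1) ->
  (forall c, \sum_t w c t = 1) ->
  \sum_c \sum_t w c t * g c t <= #|C|%:R / 2.
Proof.
move=> fK w_ge0 wf gf w1.
rewrite exchange_big /=.
apply: le_trans (ler_sum _ (fun t _ => sum_le_half_involutive (fK t) _ _ _)) _ => //.
by rewrite -mulr_sumr exchange_big /= (eq_bigr _ (fun c _ => w1 c)) sumr_const mulrC.
Qed.

Section Distributions.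
Context {R : realType}.

Lemma sum_tuple_dist (T : finType) n (p : {ffun T -> R}) : is_dist p ->
  \sum_(t : n.-tuple T) \prod_(i < n) p (tnth t i) = 1.
Proof.
by move=> [_ p1]; rewrite sum_tuple_prod p1 big1.
Qed.

Lemma sum_dist_disjoint (T : finType) (p : {ffun T -> R}) (P Q : pred T) :
  is_dist p -> (forall t, P t -> Q t -> False) ->
  \sum_(t | P t) p t + \sum_(t | Q t) p t <= 1.
Proof.
move=> [p_ge0 p1] PQ; rewrite -p1 [leRHS](bigID P) /= lerD2l.
rewrite big_mkcond [leRHS]big_mkcond; apply: ler_sum => t _ /=.
have [Qt|_] := boolP (Q t); last by case: ifP.
by case: ifPn => // /negPn Pt; case: (PQ t Pt Qt).
Qed.

Definition point_dist (T : finType) (a : T) : {ffun T -> R} :=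
  [ffun t => (t == a)%:R].

Lemma sum_point_dist (T : finType) (a : T) (P : pred T) :
  \sum_(t | P t) point_dist a t = (P a)%:R.
Proof.
rewrite big_mkcond (bigD1 a) //= big1 => [|t /negbTE ta]; last first.
  by rewrite ffunE ta if_same.
by rewrite ffunE eqxx addr0; case: (P a).
Qed.

Lemma is_dist_point (T : finType) (a : T) : is_dist (point_dist a).
Proof.
split=> [t|]; first by rewrite ffunE ler0n.
exact: (sum_point_dist a xpredT).
Qed.

End Distributions.

Section Hamming.
Variable X : finType.
Implicit Types f g h : @hyp X.

Definition weight h := #|[set x | h x]|.

Definition hamming f g := #|[set x | f x != g x]|.

Lemma hammingC f g : hamming f g = hamming g f.
Proof. by apply: eq_card => x; rewrite !inE eq_sym. Qed.

Lemma hamming_triangle f g h : (hamming f h <= hamming f g + hamming g h)%N.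
Proof.
apply: leq_trans (leq_card_setU _ _); apply/subset_leq_card/fintype.subsetP => x.
by rewrite !inE; case: (f x); case: (g x); case: (h x).
Qed.

Lemma weight_le_hamming f g : (weight f <= weight g + hamming f g)%N.
Proof.
apply: leq_trans (leq_card_setU _ _); apply/subset_leq_card/fintype.subsetP => x.
by rewrite !inE; case: (f x); case: (g x).
Qed.

End Hamming.

Section LabeledUniform.
Context {R : realType} {X : finType}.
Implicit Types (f h s : @hyp X) (S : {set @hyp X}) (mu : {ffun X * bool -> R}).

Definition labeled_uniform s : {ffun X * bool -> R} :=
  [ffun p => if s p.1 == p.2 then uniform p.1 else 0].

Lemma labeled_uniform_marginal s x :
  labeled_uniform s (x, true) + labeled_uniform s (x, false) = uniform x.
Proof. by rewrite !ffunE /=; case: (s x); rewrite ?addr0 ?add0r. Qed.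

Lemma err_labeled_uniform s h :
  err (labeled_uniform s) h = (hamming h s)%:R / #|X|%:R.
Proof.
rewrite /err big_mkcond sum_prod_bool /hamming -sum1_card natr_sum mulr_suml.
rewrite [RHS]big_mkcond; apply: eq_bigr => x _ /=; rewrite !ffunE inE /uniform /=.
by case: (h x); case: (s x); rewrite /= ?addr0 ?add0r ?mul1r ?mul0r.
Qed.

Lemma ler_err_labeled_uniform s f h : (hamming f s <= hamming h s)%N ->
  err (labeled_uniform s) f <= err (labeled_uniform s) h.
Proof.
by move=> fh; rewrite !err_labeled_uniform ler_wpM2r ?invr_ge0 ?ler0n ?ler_nat.
Qed.

Lemma admissible_labeled_uniform S s : (0 < #|X|)%N -> s \in S ->
  admissible uniform S (labeled_uniform s).
Proof.
move=> X_gt0 sS.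
have sum_uniform : \sum_(x : X) uniform x = 1 :> R.
  by rewrite /uniform sumr_const -[LHS]mulr_natl mulfV // pnatr_eq0 -lt0n.
split; last 1 first.
- exists s => //; rewrite -sum_uniform big_mkcond sum_prod_bool /=.
  by apply: eq_bigr => x _; rewrite !ffunE /=; case: (s x); rewrite /= ?addr0 ?add0r.
- split; last by rewrite sum_prod_bool -sum_uniform; apply: eq_bigr => x _;
    exact: labeled_uniform_marginal.
  by move=> [x b]; rewrite ffunE; case: ifP; rewrite // invr_ge0 ler0n.
- exact: labeled_uniform_marginal.
Qed.

Lemma admissible_uniformP S mu : admissible uniform S mu ->
  exists2 s, s \in S & mu = labeled_uniform s.
Proof.
move=> [[mu_ge0 mu1] marg [s sS mu_s]]; exists s => //.
have mu_off : \sum_(p | s p.1 != p.2) mu p = 0.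
  move: mu1; rewrite (bigID (fun p => s p.1 == p.2)) /= mu_s => /eqP.
  by rewrite -subr_eq0 addrC addrK => /eqP.
have off0 := psumr_eq0P (fun p _ => mu_ge0 p) mu_off.
apply/ffunP => -[x b]; rewrite ffunE /=; case: eqP => [sxb|/eqP sxb]; last exact: off0.
rewrite -(marg x); case: b sxb => sxb.
  by rewrite (off0 (x, false)) /= ?sxb // addr0.
by rewrite (off0 (x, true)) /= ?sxb // add0r.
Qed.

End LabeledUniform.

Section SampleComplexity.
Context {R : realType} {X : finType}.
Variables (muX : X -> R) (S B : {set @hyp X}) (eps delta : R).

Lemma numCompL_eq0 : CompL muX 0 S B eps delta -> numCompL muX S B eps delta = 0%E.
Proof.
move=> CompL0; apply/eqP; rewrite eq_le; apply/andP; split.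
  by apply: ereal_inf_lbound; exists 0%N.
by apply/ereal_infP => _ [n _ <-]; rewrite lee_fin ler0n.
Qed.

Lemma numCompL_ge (r : R) :
  (forall n, CompL muX n S B eps delta -> r <= n%:R) ->
  (r%:E <= numCompL muX S B eps delta)%E.
Proof. by move=> r_le; apply/ereal_infP => _ [n /r_le r_n <-]; rewrite lee_fin. Qed.

End SampleComplexity.

Lemma CompL0_classK {R : realType} {X : finType} (k l : nat) (eps delta : R) :
  (2 * k <= l)%N -> 0 <= eps -> 0 <= delta ->
  CompL (uniform (X:=X)) 0 (classK k) (classK l) eps delta.
Proof.
move=> kl eps_ge0 delta_ge0; pose f0 : @hyp X := [ffun=> false].
exists (fun=> point_dist f0); split=> [t|mu mu_adm]; first exact: is_dist_point.
have [[mu_dist _ _] [s sS mu_s]] := (mu_adm, admissible_uniformP mu_adm).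
rewrite {}mu_s in mu_dist *; move: sS; rewrite inE => /eqP ws.
have f0_good : [forall b in classK l,
    err (labeled_uniform s) f0 <= err (labeled_uniform s) b + eps].
  apply/forall_inP => b; rewrite !inE => /eqP wb.
  apply: ler_wpDr eps_ge0 _; apply: ler_err_labeled_uniform.
  have -> : hamming f0 s = k.
    by rewrite -ws; apply: eq_card => x; rewrite !inE ffunE; case: (s x).
  by rewrite -(leq_add2l k) addnn -mul2n (leq_trans kl) // -wb -ws weight_le_hamming.
rewrite /success_prob (eq_bigr (fun t => \prod_(i < 0) labeled_uniform s (tnth t i))).
  by rewrite sum_tuple_dist // lerBlDr lerDl.
by move=> t _; rewrite sum_point_dist f0_good mulr1.
Qed.

Section LowerBound.
Context {R : realType} {X : finType}.
Variable m : nat.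
Local Notation cell := ('I_m * bool)%type.
Variable e : X -> cell * bool.
Hypothesis e_bij : bijective e.
Implicit Types c : {ffun cell -> bool}.

Lemma card_preim (P : pred (cell * bool)) :
  #|[set x | P (e x)]| = #|[set y | P y]|.
Proof.
by rewrite -(on_card_preimset (onW_bij _ e_bij)); apply: eq_card => x; rewrite !inE.
Qed.

Lemma card_graph c (Q : pred cell) :
  #|[set y : cell * bool | (y.2 == c y.1) && Q y.1]| = #|[set j | Q j]|.
Proof.
have -> : [set y : cell * bool | (y.2 == c y.1) && Q y.1] =
          (fun j => (j, c j)) @: [set j | Q j].
  apply/setP => -[j b]; rewrite inE /=; apply/idP/imsetP.
    by move=> /andP[/eqP -> Qj]; exists j; rewrite ?inE.
  by move=> [j' Qj [-> ->]]; rewrite eqxx; rewrite inE in Qj.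
by rewrite card_imset // => j1 j2 [].
Qed.

Lemma card_cells_bit b : #|[set j : cell | j.2 == b]| = m.
Proof.
have -> : [set j : cell | j.2 == b] = finset.setX [set: 'I_m] [set b].
  by apply/setP => -[i b']; rewrite !inE.
by rewrite cardsX cardsT card_ord cards1 muln1.
Qed.

Definition concept c : @hyp X := [ffun x => (e x).2 == c (e x).1].

Definition half_concept c : @hyp X := [ffun x => concept c x && ~~ (e x).1.2].

Lemma concept_classK c : concept c \in classK (2 * m).
Proof.
rewrite inE; apply/eqP; transitivity #|[set y : cell * bool | (y.2 == c y.1) && true]|.
  by rewrite -card_preim; apply: eq_card => x; rewrite !inE ffunE andbT.
by rewrite (card_graph c xpredT) cardsT card_prod card_ord card_bool mulnC.
Qed.

Lemma half_concept_classK c : half_concept c \in classK m.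
Proof.
rewrite inE; apply/eqP; transitivity #|[set y : cell * bool | (y.2 == c y.1) && ~~ y.1.2]|.
  by rewrite -card_preim; apply: eq_card => x; rewrite !inE !ffunE.
rewrite (card_graph c (fun j => ~~ j.2)) -[RHS](card_cells_bit false).
by apply: eq_card => j; rewrite !inE eqbF_neg.
Qed.

Lemma hamming_half_concept c : hamming (half_concept c) (concept c) = m.
Proof.
transitivity #|[set y : cell * bool | (y.2 == c y.1) && y.1.2]|.
  rewrite -card_preim; apply: eq_card => x; rewrite !inE !ffunE.
  by case: ((e x).2 == _); case: (e x).1.2.
rewrite (card_graph c (fun j => j.2)) -[RHS](card_cells_bit true).
by apply: eq_card => j; rewrite !inE eqb_id.
Qed.

Section Sample.
Variables (n : nat) (t : n.-tuple (X * bool)).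

Definition seen : {set cell} := [set (e (tnth t i).1).1 | i : 'I_n].

Definition flip_unseen c : {ffun cell -> bool} :=
  [ffun j => if j \in seen then c j else ~~ c j].

Lemma flip_unseenK : involutive flip_unseen.
Proof. by move=> c; apply/ffunP => j; rewrite !ffunE; case: (j \in seen); rewrite ?negbK. Qed.

Lemma likelihood_flip_unseen c :
  \prod_(i < n) labeled_uniform (R:=R) (concept (flip_unseen c)) (tnth t i) =
  \prod_(i < n) labeled_uniform (concept c) (tnth t i).
Proof.
apply: eq_bigr => i _; rewrite !ffunE; suff -> : (e (tnth t i).1).1 \in seen by [].
by apply/imsetP; exists i.
Qed.

Lemma hamming_concept_flip_unseen c :
  hamming (concept c) (concept (flip_unseen c)) = (#|~: seen| * 2)%N.
Proof.
transitivity #|[set y : cell * bool | y.1 \in ~: seen]|.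
  rewrite -card_preim; apply: eq_card => x; rewrite !inE !ffunE.
  by case: ((e x).1 \in seen); case: (e x).2; case: (c _).
rewrite -card_bool -cardsT -cardsX; apply: eq_card => -[j b].
by rewrite !inE andbT.
Qed.

Lemma card_unseen : (2 * m <= #|~: seen| + n)%N.
Proof.
have seen_le : (#|seen| <= n)%N.
  by apply: leq_trans (leq_imset_card _ _) _; rewrite card_ord.
have := cardsC seen; rewrite card_prod card_ord card_bool mulnC => <-.
by rewrite addnC leq_add2l.
Qed.

End Sample.

Lemma card_X : #|X| = (4 * m)%N.
Proof. by rewrite (bij_eq_card e_bij) !card_prod card_ord card_bool -mulnA mulnC. Qed.

Definition eps_good (eps : R) c f :=
  [forall b in classK m, err (labeled_uniform (concept c)) f <=
                         err (labeled_uniform (concept c)) b + eps].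

Lemma eps_good_hamming eps c f : (0 < m)%N -> eps_good eps c f ->
  (hamming f (concept c))%:R <= m%:R + 4 * m%:R * eps.
Proof.
move=> m_gt0 /forall_inP /(_ _ (half_concept_classK c)).
have X_gt0 : 0 < #|X|%:R :> R by rewrite card_X ltr0n muln_gt0.
rewrite !err_labeled_uniform hamming_half_concept -(ler_pM2r X_gt0).
by rewrite mulrDl !divfK ?gt_eqF // card_X natrM mulrC.
Qed.

Lemma eps_good_flip_unseen n (t : n.-tuple (X * bool)) eps c f : (0 < m)%N ->
  eps_good eps c f -> eps_good eps (flip_unseen t c) f ->
  (1 - 4 * eps) * m%:R <= n%:R.
Proof.
move=> m_gt0 /(eps_good_hamming m_gt0) fc /(eps_good_hamming m_gt0) fc'.
have := hamming_triangle (concept c) f (concept (flip_unseen t c)).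
have := card_unseen t.
rewrite hamming_concept_flip_unseen hammingC -!(ler_nat R) !natrD !natrM.
lra.
Qed.

Lemma CompL_classK_lower_bound n (eps delta : R) : delta < 1/2 ->
  CompL (uniform (X:=X)) n (classK (2 * m)) (classK m) eps delta ->
  (1 - 4 * eps) * m%:R <= n%:R.
Proof.
move=> delta_lt [A [A_dist A_succ]]; rewrite leNgt; apply/negP => n_lt.
have m_gt0 : (0 < m)%N.
  by rewrite lt0n; apply: contraTneq n_lt => ->; rewrite mulr0n mulr0 -leNgt ler0n.
have X_gt0 : (0 < #|X|)%N by rewrite card_X muln_gt0.
pose w c t := \prod_(i < n) labeled_uniform (R:=R) (concept c) (tnth t i).
pose g c t := \sum_(f | eps_good eps c f) A t f.
have [w_ge0 w1] : (forall c t, 0 <= w c t) /\ forall c, \sum_t w c t = 1.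
  split=> c; have [w_dist _ _] := admissible_labeled_uniform (R:=R) X_gt0 (concept_classK c).
    by move=> t; apply: prodr_ge0 => i _; apply: w_dist.1.
  exact: sum_tuple_dist.
have g_flip c t : g c t + g (flip_unseen t c) t <= 1.
  apply: sum_dist_disjoint (A_dist t) _ => f fc fc'.
  by move: n_lt; rewrite ltNge (eps_good_flip_unseen m_gt0 fc fc').
have := sum_sum_le_half_involutive (@flip_unseenK n) w_ge0
  (fun c t => likelihood_flip_unseen t c) g_flip w1.
have N_gt0 : 0 < #|{ffun cell -> bool}|%:R :> R.
  by rewrite ltr0n; apply/card_gt0P; exists [ffun=> true].
have : #|{ffun cell -> bool}|%:R * (1 - delta) <= \sum_c \sum_t w c t * g c t.
  rewrite mulr_natl -sumr_const; apply: ler_sum => c _.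
  exact: A_succ (admissible_labeled_uniform X_gt0 (concept_classK c)).
have : 0 < #|{ffun cell -> bool}|%:R * (1/2 - delta) by rewrite mulr_gt0 ?subr_gt0.
lra.
Qed.

End LowerBound.

Unset Implicit Arguments.

Theorem lemmaC1 (R : realType) (m : nat) (X : finType) :
  (0 < m)%N -> #|X| = (4 * m)%N ->
  (forall eps delta : R, 0 <= eps -> 0 <= delta ->
     numCompL (uniform (X:=X)) (classK m) (classK (2 * m)) eps delta = 0%E) /\
  (forall eps delta : R, 0 < eps < 1/4 -> 0 < delta < 1/2 ->
     (((1/2 - 2 * eps) * m%:R)%:E <=
        numCompL (uniform (X:=X)) (classK (2 * m)) (classK m) eps delta)%E).
Proof.
move=> _ cardX; split=> eps delta.
  by move=> eps_ge0 delta_ge0; apply: numCompL_eq0; apply: CompL0_classK.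
move=> /andP[_ eps_lt] /andP[_ delta_lt]; apply: numCompL_ge => n CompLn.
have [e e_bij] : exists e : X -> ('I_m * bool) * bool, bijective e.
  by apply: card_eq_bij; rewrite cardX !card_prod card_ord card_bool -mulnA mulnC.
apply: le_trans (CompL_classK_lower_bound e_bij delta_lt CompLn).
by rewrite ler_wpM2r ?ler0n //; lra.
Qed.
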